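(* Let $\Phi:[0,\infty)\to[0,\infty)$ be nondecreasing with $\Phi(0)=0$, and let $\Psi:[0,\infty)\to[0,\infty)$ be nondecreasing and convex with $\Psi(0)=0$. Let $x=(x_n)$, $y=(y_n)$ be real sequences tending to $0$ such that $x\gtrless y$ and $\sum_{j=1}^\infty\Phi(|y_j|)\le\sum_{j=1}^\infty\Phi(|x_j|)<\infty$. Then \[ \sum_{j=1}^\infty\Psi(\Phi(|x_j|))\ge\sum_{j=1}^\infty\Psi(\Phi(|y_j|)) \] (with values in $[0,\infty]$).
   Context: For a real sequence $x\to0$, $x^*=(x_n^* )$ is the nonincreasing permutation of $(|x_n|)$. $x\gtrless y$ means there is $n_0\in\mathbb N$ with $x_n^*\ge y_n^*$ for $n\le n_0$ and $x_n^*\le y_n^*$ for $n>n_0$. *)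

From HB Require Import structures.
From mathcomp Require Import all_boot all_order all_algebra.
From mathcomp Require Import all_classical all_reals all_analysis.
Set Implicit Arguments. Unset Strict Implicit. Unset Printing Implicit Defensive.
Import Order.TTheory GRing.Theory Num.Theory.
Import numFieldNormedType.Exports.
Local Open Scope classical_set_scope.
Local Open Scope ring_scope.

(* Nonincreasing rearrangement x^* of (|x_n|), indexed from 0:
   xstar x n = x^*_{n+1} (paper indexing) = inf { t >= 0 : #{j : |x_j| > t} <= n }.
   "#{j : |x_j| > t} <= n" is expressed as: the set is covered by a list of length n. *)
Definition xstar (R : realType) (x : nat -> R) (n : nat) : R :=
  inf [set t : R | 0 <= t /\
         exists s : seq nat, size s = n /\ (forall j, t < `|x j| -> j \in s)].

(* x ≷ y : there is n0 in N = {1,2,...} with x^*_n >= y^*_n for n <= n0 and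
   x^*_n <= y^*_n for n > n0 (shifted to 0-based indexing: n0' = n0 - 1). *)
Definition gtrless (R : realType) (x y : nat -> R) : Prop :=
  exists n0 : nat, forall n : nat,
    ((n <= n0)%N -> xstar y n <= xstar x n) /\
    ((n0 < n)%N -> xstar x n <= xstar y n).

From HB Require Import structures.
From mathcomp Require Import all_boot all_order all_algebra.
From mathcomp Require Import all_classical all_reals all_analysis.
From mathcomp Require Import ring lra.
Import Order.TTheory GRing.Theory Num.Theory.
Import numFieldNormedType.Exports.
Local Open Scope classical_set_scope.
Local Open Scope ring_scope.

(* Proof of Theorem 19.  Write A_k = Phi(x^*_k) and B_k = Phi(y^*_k).

   1. Rearrangement: for f nondecreasing and nonnegative on [0,oo),
      sum_j f(|x_j|) = sum_k f(x^*_k) for every null sequence x.  The "<="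
      direction compares any finite family of indices with the first terms
      of x^*; the ">=" direction picks greedily the largest remaining |x_j|.
   2. Crossing: if B_k <= A_k up to n0, A_k <= B_k after n0, and
      sum B <= sum A with sum B finite, then every partial sum of B is
      bounded by the corresponding partial sum of A.
   3. Tomic-Weyl: for Psi nondecreasing and convex on [0,oo), b nonincreasing
      and weakly submajorized by a, sum_{k<m} Psi(b_k) <= sum_{k<m} Psi(a_k).
      This follows from the subgradient inequality at b_k (with the right
      derivative of Psi, which is nondecreasing) and Abel summation.
   The theorem follows: by 1 the hypotheses transfer to A and B, 2 yields
   weak submajorization, 3 applied to Psi gives the partial-sum comparison,
   and 1 (now with Psi o Phi) transfers the conclusion back to x and y. *)

Lemma nneseries_le_partial {R : realType} (u v : nat -> R) :
  (forall n, 0 <= u n) -> (forall n, 0 <= v n) ->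
  (forall N, exists M, \sum_(0 <= k < N) u k <= \sum_(0 <= j < M) v j) ->
  (\sum_(0 <= k <oo) (u k)%:E <= \sum_(0 <= j <oo) (v j)%:E)%E.
Proof.
move=> u0 v0 uv.
have u_cvg : cvgn (fun n => (\sum_(0 <= k < n) (u k)%:E)%E).
  by apply: is_cvg_nneseries => n _ _; rewrite lee_fin.
apply: (lime_le u_cvg); apply: nearW => N /=.
have [M uvM] := uv N.
apply: le_trans (nneseries_lim_ge M _); last by move=> n _ _; rewrite lee_fin.
by rewrite !sumEFin lee_fin.
Qed.

Lemma nneseries_le_bound {R : realType} (u : nat -> R) (r : R) :
  (forall n, 0 <= u n) -> (forall N, \sum_(0 <= k < N) u k <= r) ->
  (\sum_(0 <= k <oo) (u k)%:E <= r%:E)%E.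
Proof.
move=> u0 ur.
have u_cvg : cvgn (fun n => (\sum_(0 <= k < n) (u k)%:E)%E).
  by apply: is_cvg_nneseries => n _ _; rewrite lee_fin.
by apply: (lime_le u_cvg); apply: nearW => N /=; rewrite sumEFin lee_fin.
Qed.

Lemma seq_argmax {R : realType} (g : nat -> R) (s : seq nat) : s != [::] ->
  exists2 j, j \in s & forall i, i \in s -> g i <= g j.
Proof.
elim: s => [//|a [|b s] IH] _.
  by exists a => [|i]; rewrite ?mem_seq1 ?eqxx // => /eqP->.
have [j js jmax] := IH isT.
have [gaj|gja] := leP (g a) (g j).
  exists j => [|i]; first by rewrite in_cons js orbT.
  by rewrite in_cons => /orP[/eqP->//|/jmax].
exists a => [|i]; first by rewrite in_cons eqxx.
by rewrite in_cons => /orP[/eqP->//|/jmax/le_trans]; apply; exact: ltW.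
Qed.

Lemma seq_argmin {R : realType} (g : nat -> R) (s : seq nat) : s != [::] ->
  exists2 j, j \in s & forall i, i \in s -> g j <= g i.
Proof.
by move=> /(@seq_argmax _ (fun i => - g i))[j js jmax]; exists j => // i /jmax; rewrite lerN2.
Qed.

Lemma seq_ub (L : seq nat) : exists M, forall j, j \in L -> (j < M)%N.
Proof. by exists (\max_(j <- L) j).+1 => j jL; rewrite ltnS (@leq_bigmax_seq _ L xpredT id j jL). Qed.

Lemma sum_seq_le_sum_iota {R : realType} (F : nat -> R) (L : seq nat) (M : nat) :
  uniq L -> (forall j, j \in L -> (j < M)%N) -> (forall j, 0 <= F j) ->
  \sum_(j <- L) F j <= \sum_(0 <= j < M) F j.
Proof.
move=> uL LM F0; rewrite [X in _ <= X](bigID (mem L)) /=.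
have -> : \sum_(j <- L) F j = \sum_(0 <= j < M | j \in L) F j.
  rewrite -[RHS]big_filter; apply: perm_big; apply: uniq_perm => //.
    by rewrite filter_uniq // iota_uniq.
  move=> j; rewrite mem_filter mem_index_iota /=.
  by case jL: (j \in L) => //=; rewrite LM.
by rewrite lerDl sumr_ge0.
Qed.

Lemma cvg0_bounded {R : realType} (x : nat -> R) : x @ \oo --> 0 ->
  exists2 M, 0 <= M & forall j, `|x j| <= M.
Proof.
move=> /(cvgP _)/cvg_seq_bounded[M [_ xM]].
have M_lt : M < `|M| + 1 by rewrite (le_lt_trans (ler_norm M)) // ltrDl.
by exists (`|M| + 1) => [|j]; [rewrite addr_ge0 | exact: xM].
Qed.

Section Rearrangement.
Context {R : realType} {x : nat -> R}.
Hypothesis x_cvg : x @ \oo --> 0.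

Definition level_set (n : nat) : set R := [set t : R | 0 <= t /\
  exists s : seq nat, size s = n /\ (forall j, t < `|x j| -> j \in s)].

Lemma level_set_neq0 n : level_set n !=set0.
Proof.
have [M M0 xM] := cvg0_bounded x x_cvg; exists M; split => //.
exists (nseq n 0%N); split => [|j]; first by rewrite size_nseq.
by rewrite ltNge xM.
Qed.

Lemma xstar_ge0 n : 0 <= xstar x n.
Proof. by apply: lb_le_inf; [exact: level_set_neq0 | move=> t []]. Qed.

Lemma xstar_le_level n t : level_set n t -> xstar x n <= t.
Proof. by move=> nt; apply: ge_inf => //; exists 0 => s []. Qed.

Lemma xstar_nonincr n : xstar x n.+1 <= xstar x n.
Proof.
apply: lb_le_inf; first exact: level_set_neq0.
move=> t [t0 [s [sn ts]]]; apply: xstar_le_level; split => //.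
exists (0%N :: s); split => [|j /ts js]; first by rewrite /= sn.
by rewrite in_cons js orbT.
Qed.

Lemma xstar_ge (L : seq nat) n c : uniq L -> size L = n.+1 ->
  (forall j, j \in L -> c <= `|x j|) -> c <= xstar x n.
Proof.
move=> uL Ln Lc; apply: lb_le_inf; first exact: level_set_neq0.
move=> t [_ [s [sn ts]]]; rewrite leNgt; apply/negP => tc.
have : (size L <= size s)%N.
  by apply: uniq_leq_size => // j /Lc cj; apply: ts; exact: lt_le_trans cj.
by rewrite sn Ln ltnn.
Qed.

Lemma argmax_outside (L : seq nat) :
  exists2 j, j \notin L & forall i, i \notin L -> `|x i| <= `|x j|.
Proof.
have [[j0 [j0L j0pos]]|all0] := pselect (exists j, j \notin L /\ 0 < `|x j|).
  have [N0 _ smallN0] := cvgr0_norm_lt x x_cvg _ j0pos.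
  set s := [seq i <- iota 0 N0 | i \notin L].
  have j0s : j0 \in s.
    rewrite mem_filter j0L mem_iota /= add0n ltnNge; apply/negP => /smallN0.
    by rewrite ltxx.
  have s_neq0 : s != [::] by apply: contraTneq j0s => ->.
  have [j js jmax] := @seq_argmax _ (fun i => `|x i|) s s_neq0.
  exists j => [|i iL]; first by move: js; rewrite mem_filter => /andP[].
  have [iN0|N0i] := ltnP i N0.
    by apply: jmax; rewrite mem_filter iL mem_iota /= add0n.
  exact: ltW (lt_le_trans (smallN0 _ N0i) (jmax _ j0s)).
have [M LM] := seq_ub L.
have ML : M \notin L by apply/negP => /LM; rewrite ltnn.
exists M => // i iL; apply: le_trans (normr_ge0 (x M)).
by rewrite leNgt; apply/negP => ipos; apply: all0; exists i.
Qed.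

Section Monotone.
Context {f : R -> R}.
Hypothesis f_mono : forall a b, 0 <= a -> a <= b -> f a <= f b.
Hypothesis f_ge0 : forall a, 0 <= a -> 0 <= f a.

Lemma sum_seq_le_xstar (L : seq nat) n : uniq L -> size L = n ->
  \sum_(j <- L) f `|x j| <= \sum_(0 <= k < n) f (xstar x k).
Proof.
elim: n L => [|n IH] L uL Ln; first by move/size0nil: Ln => ->; rewrite !big_nil.
have L_neq0 : L != [::] by rewrite -size_eq0 Ln.
have [jm jmL jmin] := @seq_argmin _ (fun j => `|x j|) L L_neq0.
rewrite (perm_big _ (perm_to_rem jmL)) big_cons big_nat_recr //= addrC.
apply: lerD; first by apply: IH; rewrite ?rem_uniq // size_rem // Ln.
by apply: f_mono => //; exact: xstar_ge uL Ln jmin.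
Qed.

Lemma xstar_le_sum_seq N : exists L : seq nat, [/\ uniq L, size L = N &
  \sum_(0 <= k < N) f (xstar x k) <= \sum_(j <- L) f `|x j|].
Proof.
elim: N => [|N [L [uL LN sumL]]]; first by exists [::]; rewrite !big_nil.
have [j jL jmax] := argmax_outside L.
exists (j :: L); split; rewrite /= ?jL ?uL ?LN //.
rewrite big_nat_recr //= big_cons addrC; apply: lerD => //.
apply: f_mono; first exact: xstar_ge0.
apply: xstar_le_level; split => //; exists L; split => // i xi.
by apply/negPn/negP => /jmax; rewrite leNgt xi.
Qed.

Lemma nneseries_xstar :
  (\sum_(0 <= j <oo) (f `|x j|)%:E = \sum_(0 <= k <oo) (f (xstar x k))%:E)%E.
Proof.
have fx0 j : 0 <= f `|x j| by exact: f_ge0.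
have fxs0 k : 0 <= f (xstar x k) by exact/f_ge0/xstar_ge0.
apply: le_anti; apply/andP; split; apply: nneseries_le_partial => // N.
  exists N; have := @sum_seq_le_xstar (iota 0 N) N (iota_uniq 0 N) (size_iota 0 N).
  by rewrite /index_iota subn0.
have [L [uL _ sumL]] := xstar_le_sum_seq N.
have [M LM] := seq_ub L; exists M; apply: le_trans sumL _.
exact: sum_seq_le_sum_iota.
Qed.

End Monotone.
End Rearrangement.

Lemma crossing_partial_sums {R : realType} (A B : nat -> R) (n0 : nat) :
  (forall k, 0 <= A k) -> (forall k, 0 <= B k) ->
  (forall k, (k <= n0)%N -> B k <= A k) -> (forall k, (n0 < k)%N -> A k <= B k) ->
  (\sum_(0 <= k <oo) (B k)%:E <= \sum_(0 <= k <oo) (A k)%:E)%E ->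
  (\sum_(0 <= k <oo) (B k)%:E < +oo)%E ->
  forall m, \sum_(0 <= k < m) B k <= \sum_(0 <= k < m) A k.
Proof.
move=> A0 B0 head tail sum_le B_fin m.
have [m_small|m_large] := leqP m n0.+1.
  by apply: ler_sum_nat => k /andP[_ km]; apply: head; rewrite -ltnS (leq_trans km).
pose b := fine (\sum_(0 <= k <oo) (B k)%:E)%E.
have Bb : (\sum_(0 <= k <oo) (B k)%:E)%E = b%:E.
  by rewrite fineK // ge0_fin_numE // nneseries_ge0 // => k _ _; rewrite lee_fin.
have B_partial M : \sum_(0 <= k < M) B k <= b.
  by rewrite -lee_fin -Bb -sumEFin; apply: nneseries_lim_ge => k _ _; rewrite lee_fin.
pose c := \sum_(0 <= k < m) A k - \sum_(0 <= k < m) B k.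
have A_partial M : \sum_(0 <= k < M) A k <= c + b.
  have tail_le : \sum_(m <= k < M + m) A k <= \sum_(m <= k < M + m) B k.
    by apply: ler_sum_nat => k /andP[mk _]; apply: tail; exact: ltnW (leq_trans m_large mk).
  have split_sum (F : nat -> R) : \sum_(0 <= k < M + m) F k =
      \sum_(0 <= k < m) F k + \sum_(m <= k < M + m) F k.
    exact: big_cat_nat (leq0n m) (leq_addl M m).
  have : \sum_(0 <= k < M) A k <= \sum_(0 <= k < M + m) A k.
    by rewrite (big_cat_nat (leq0n M) (leq_addr m M)) /= lerDl sumr_ge0.
  have := B_partial (M + m); rewrite !split_sum /c; lra.
have := le_trans sum_le (nneseries_le_bound _ _ A0 A_partial).
by rewrite Bb lee_fin /c; lra.
Qed.

Lemma abel_partial_sum {R : realType} (G d : nat -> R) :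
  (forall n, G n.+1 <= G n) -> (forall n, 0 <= G n) ->
  (forall n, 0 <= \sum_(0 <= k < n) d k) ->
  forall n, G n * \sum_(0 <= k < n) d k <= \sum_(0 <= k < n) G k * d k.
Proof.
move=> G_nonincr G0 D0; elim => [|n IH]; first by rewrite !big_geq // mulr0.
rewrite !big_nat_recr //=; apply: le_trans (_ : _ <= G n * (\sum_(0 <= k < n) d k + d n)) _.
  by rewrite ler_wpM2r // -big_nat_recr.
by rewrite mulrDr lerD2r.
Qed.

Section TomicWeyl.
Context {R : realType} {Psi : R -> R}.
Hypothesis Psi_mono : forall a b, 0 <= a -> a <= b -> Psi a <= Psi b.
Hypothesis Psi_convex : forall a b t, 0 <= a -> 0 <= b -> 0 <= t -> t <= 1 ->
  Psi (t * a + (1 - t) * b) <= t * Psi a + (1 - t) * Psi b.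

Definition slope (v w : R) : R := (Psi w - Psi v) / (w - v).

Lemma slope_ge0 v w : 0 <= v -> v < w -> 0 <= slope v w.
Proof.
move=> v0 vw; rewrite /slope divr_ge0 // subr_ge0 ?(ltW vw) //.
exact: Psi_mono (ltW vw).
Qed.

Lemma three_chord p q r : 0 <= p -> p < q -> q < r -> slope p q <= slope q r.
Proof.
move=> p0 pq qr.
have rp : 0 < r - p by rewrite subr_gt0; exact: lt_trans qr.
have qp : 0 < q - p by rewrite subr_gt0.
have rq : 0 < r - q by rewrite subr_gt0.
have rp_neq0 : r - p != 0 by rewrite gt_eqF.
pose t := (r - q) / (r - p).
have t0 : 0 <= t by rewrite divr_ge0 // ltW.
have t1 : t <= 1 by rewrite ler_pdivrMr // mul1r lerD2l lerN2 ltW.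
have q_comb : t * p + (1 - t) * r = q by rewrite /t; field.
have := Psi_convex p r t p0 (le_trans p0 (ltW (lt_trans pq qr))) t0 t1.
rewrite q_comb => conv.
have cleared : (r - p) * Psi q <= (r - q) * Psi p + (q - p) * Psi r.
  have -> : (r - q) * Psi p + (q - p) * Psi r = (r - p) * (t * Psi p + (1 - t) * Psi r).
    by rewrite /t; field.
  by rewrite ler_pM2l.
rewrite /slope ler_pdivrMr // mulrAC ler_pdivlMr //; nra.
Qed.

Definition rderiv (v : R) : R := inf [set slope v w | w in [set w | v < w]].

Lemma rderiv_slopes_neq0 v : [set slope v w | w in [set w | v < w]] !=set0.
Proof. by exists (slope v (v + 1)); exists (v + 1); rewrite /= ?ltrDl. Qed.

Lemma rderiv_le_slope v w : 0 <= v -> v < w -> rderiv v <= slope v w.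
Proof.
move=> v0 vw; apply: ge_inf; last by exists w.
by exists 0 => _ [u vu <-]; exact: slope_ge0.
Qed.

Lemma rderiv_ge0 v : 0 <= v -> 0 <= rderiv v.
Proof.
move=> v0; apply: lb_le_inf; first exact: rderiv_slopes_neq0.
by move=> _ [w vw <-]; exact: slope_ge0.
Qed.

Lemma slope_le_rderiv u v : 0 <= u -> u < v -> slope u v <= rderiv v.
Proof.
move=> u0 uv; apply: lb_le_inf; first exact: rderiv_slopes_neq0.
by move=> _ [w vw <-]; exact: three_chord.
Qed.

Lemma rderiv_mono v v' : 0 <= v -> v <= v' -> rderiv v <= rderiv v'.
Proof.
move=> v0; rewrite le_eqVlt => /orP[/eqP->//|vv'].
exact: le_trans (rderiv_le_slope _ _ v0 vv') (slope_le_rderiv _ _ v0 vv').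
Qed.

Lemma subgradient u v : 0 <= u -> 0 <= v -> rderiv v * (u - v) <= Psi u - Psi v.
Proof.
move=> u0 v0; case: (ltgtP u v) => uv.
- have := slope_le_rderiv _ _ u0 uv; rewrite /slope ler_pdivrMr ?subr_gt0 // => le_uv.
  by rewrite -opprB mulrN lerNl opprB.
- by have := rderiv_le_slope _ _ v0 uv; rewrite /slope ler_pdivlMr ?subr_gt0.
- by rewrite uv !subrr mulr0.
Qed.

Lemma tomic_weyl (a b : nat -> R) : (forall k, 0 <= a k) -> (forall k, 0 <= b k) ->
  (forall k, b k.+1 <= b k) ->
  (forall m, \sum_(0 <= k < m) b k <= \sum_(0 <= k < m) a k) ->
  forall m, \sum_(0 <= k < m) Psi (b k) <= \sum_(0 <= k < m) Psi (a k).
Proof.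
move=> a0 b0 b_nonincr ab m; rewrite -subr_ge0 -sumrB.
have D0 n : 0 <= \sum_(0 <= k < n) (a k - b k) by rewrite sumrB subr_ge0.
have abel := @abel_partial_sum _ (fun k => rderiv (b k)) _
  (fun n => rderiv_mono _ _ (b0 n.+1) (b_nonincr n)) (fun n => rderiv_ge0 _ (b0 n)) D0 m.
apply: le_trans (mulr_ge0 (rderiv_ge0 _ (b0 m)) (D0 m)) _.
apply: le_trans abel _; apply: ler_sum => k _; exact: subgradient.
Qed.

End TomicWeyl.

Theorem mainTheorem19 (R : realType) (Phi Psi : R -> R) (x y : nat -> R)
  (Phi0 : Phi 0 = 0)
  (Phi_ge0 : forall a, 0 <= a -> 0 <= Phi a)
  (Phi_mono : forall a b, 0 <= a -> a <= b -> Phi a <= Phi b)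
  (Psi0 : Psi 0 = 0)
  (Psi_ge0 : forall a, 0 <= a -> 0 <= Psi a)
  (Psi_mono : forall a b, 0 <= a -> a <= b -> Psi a <= Psi b)
  (Psi_convex : forall a b t, 0 <= a -> 0 <= b -> 0 <= t -> t <= 1 ->
      Psi (t * a + (1 - t) * b) <= t * Psi a + (1 - t) * Psi b)
  (x_cvg : x @ \oo --> 0) (y_cvg : y @ \oo --> 0)
  (xy : gtrless x y)
  (sum_le : (\sum_(0 <= j <oo) (Phi `|y j|)%:E <= \sum_(0 <= j <oo) (Phi `|x j|)%:E)%E)
  (sum_fin : (\sum_(0 <= j <oo) (Phi `|x j|)%:E < +oo)%E) :
  (\sum_(0 <= j <oo) (Psi (Phi `|y j|))%:E <= \sum_(0 <= j <oo) (Psi (Phi `|x j|))%:E)%E.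
Proof.
have PsiPhi_mono a b : 0 <= a -> a <= b -> Psi (Phi a) <= Psi (Phi b).
  by move=> a0 ab; apply: Psi_mono; [exact: Phi_ge0 | exact: Phi_mono].
have PsiPhi_ge0 a : 0 <= a -> 0 <= Psi (Phi a) by move=> a0; exact/Psi_ge0/Phi_ge0.
pose A k := Phi (xstar x k); pose B k := Phi (xstar y k).
have A0 k : 0 <= A k by exact/Phi_ge0/xstar_ge0.
have B0 k : 0 <= B k by exact/Phi_ge0/xstar_ge0.
have B_nonincr k : B k.+1 <= B k by apply: Phi_mono; [exact: xstar_ge0 | exact: xstar_nonincr].
have [n0 cross] := xy.
rewrite (nneseries_xstar x_cvg Phi_mono Phi_ge0) in sum_le sum_fin.
rewrite (nneseries_xstar y_cvg Phi_mono Phi_ge0) in sum_le.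
have weak_major : forall m, \sum_(0 <= k < m) B k <= \sum_(0 <= k < m) A k.
  apply: (@crossing_partial_sums _ _ _ n0) => // [k kn0|k n0k|].
  - by apply: Phi_mono; [exact: xstar_ge0 | exact: (cross k).1].
  - by apply: Phi_mono; [exact: xstar_ge0 | exact: (cross k).2].
  - exact: le_lt_trans sum_le sum_fin.
rewrite (nneseries_xstar x_cvg PsiPhi_mono PsiPhi_ge0).
rewrite (nneseries_xstar y_cvg PsiPhi_mono PsiPhi_ge0).
apply: nneseries_le_partial => [k|k|N]; rewrite ?PsiPhi_ge0 ?xstar_ge0 //.
by exists N; exact: tomic_weyl.
Qed.
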